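(* Let $S$ be a rectangular domain and $\xi=(\xi_y)_{y\in S}$ with $\xi_y\ge0$. Let $\bar\eta=\bar\eta(0,\xi)$ be the flow field on $\mathbb{E}(\bar S)$ generated by $\xi$ with zero boundary inflow, and let $H_S(\xi)=\sum_{\ell\in C(S)}w_\eta(\ell)$. Let $G_S(\xi)=\max_{\pi}\sum_{y\in\pi}\xi_y$, the maximum being over all paths $\pi=(y_0,\dots,y_m)$ of points of $S$ such that $y_0$ is the point of $S$ with minimal $t$-coordinate, $y_m$ is the point of $S$ with maximal $t$-coordinate, and $y_{i+1}-y_i\in\{(1,1),(1,-1)\}$ for all $i$. Then $G_S(\xi)=H_S(\xi)$.
   Context: Lattice and edges. $\tilde{\mathbb{Z}}^2=\{(t,x)\in\mathbb{Z}^2:t+x\text{ even}\}$; edges join points at distance $\sqrt2$. For $y=(t,x)$: - $e^\nearrow_y=\langle(t,x),(t+1,x+1)\rangle$, - $e^\searrow_y=\langle(t,x),(t+1,x-1)\rangle$, - $e^\swarrow_y=\langle(t-1,x-1),(t,x)\rangle$, - $e^\nwarrow_y=\langle(t-1,x+1),(t,x)\rangle$. Domains. A rectangular domain is a nonempty set $S=\{(t,x)\in\tilde{\mathbb{Z}}^2: a\le t+x\le b,\ c\le t-x\le d\}$ with even integers $a\le b$, $c\le d$. It has unique points of minimal and of maximal $t$-coordinate. $\bar S$ is $S$ together with all points joined by an edge to a point of $S$; $\partial\bar S=\bar S\setminus S$; $\mathbb{E}(\bar S)$ is the set of edges with at least one endpoint in $S$. Flow field. A flow field is $\eta(e)\ge0$,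 $e\in\mathbb{E}(\bar S)$, with $\eta(e^\nwarrow_y)+\eta(e^\nearrow_y)=\eta(e^\swarrow_y)+\eta(e^\searrow_y)$ for all $y\in S$; its birth field is $\xi_y=\eta(e^\nearrow_y)\wedge\eta(e^\searrow_y)$. Generated flow field $\bar\eta(0,\xi)$. Set $\eta(e)=0$ on every edge $e^\swarrow_y$ or $e^\nwarrow_y$ ($y\in S$) whose other endpoint lies outside $S$. Then, recursively in increasing $t$, for $y\in S$: $$\eta(e^\nearrow_y)=\xi_y+[\eta(e^\swarrow_y)-\eta(e^\nwarrow_y)]^+,\qquad \eta(e^\searrow_y)=\xi_y+[\eta(e^\nwarrow_y)-\eta(e^\swarrow_y)]^+.$$ Association. For $y\in S$, lower edge $f_1\in\{e^\swarrow_y,e^\searrow_y\}$ with $p_1\in(0,\eta(f_1)]$, and upper edge $f_2\in\{e^\nwarrow_y,e^\nearrow_y\}$ with $p_2\in(0,\eta(f_2)]$, write $(f_1,p_1)\sim_y(f_2,p_2)$ exactly when: - Case 1: $f_1=e^\swarrow_y$, $f_2=e^\nwarrow_y$, $p_1\le\eta(f_1)\wedge\eta(f_2)$, $p_2=p_1$; - Case 2: $f_1=e^\searrow_y$, $f_2=e^\nwarrow_y$, $p_2>\eta(e^\swarrow_y)$, $p_1=p_2-\eta(e^\swarrow_y)$; - Case 3: $f_1=e^\swarrow_y$, $f_2=e^\nearrow_y$, $p_1>\eta(e^\nwarrow_y)$, $p_2=p_1-\eta(e^\nwarrow_y)$; - Case 4: $f_1=e^\searrow_y$, $f_2=e^\nearrow_y$,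 $p_i>\eta(f_i)-\xi_y$, $\eta(f_1)-p_1=\eta(f_2)-p_2$. Broken traces. A broken trace is $\ell=(y_0,e_1,y_1,\dots,e_n,y_n)$, $n\ge1$, with $e_i=\langle y_{i-1},y_i\rangle$, $x_i=x_{i-1}+1$, $t_i-t_{i-1}\in\{\pm1\}$. $\ell\subseteq\bar S$ means $y_0,y_n\in\bar S$, $y_1,\dots,y_{n-1}\in S$, all $e_i\in\mathbb{E}(\bar S)$. $C(S)$ is the set of $\ell\subseteq\bar S$ with $y_0,y_n\in\partial\bar S$. Weight. $w_\eta(\ell)$ is the Lebesgue measure of the set of $p_1\in(0,\eta(e_1)]$ admitting $p_i\in(0,\eta(e_i)]$ with $(e_{i-1},p_{i-1})\sim_{y_{i-1}}(e_i,p_i)$ for $i=2,\dots,n$. *)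

From Stdlib Require Import Bool Reals Lra ZArith List ClassicalEpsilon.
Import ListNotations.
Open Scope R_scope.

(* Points (t,x) of Z^2; edges are represented by (lower point, direction):
   (y, true)  = <(t,x),(t+1,x+1)>,   (y, false) = <(t,x),(t+1,x-1)>. *)
Definition Pt := (Z * Z)%type.
Definition Edge := (Pt * bool)%type.

Definition e_ne (y : Pt) : Edge := (y, true).
Definition e_se (y : Pt) : Edge := (y, false).
Definition e_sw (y : Pt) : Edge := ((fst y - 1, snd y - 1)%Z, true).
Definition e_nw (y : Pt) : Edge := ((fst y - 1, snd y + 1)%Z, false).

Definition upper (e : Edge) : Pt :=
  let '(y, d) := e in (fst y + 1, if d then snd y + 1 else snd y - 1)%Z.

Definition inS (a b c d : Z) (y : Pt) : bool :=
  let '(t, x) := y in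
  (Z.even (t + x) && (a <=? t + x) && (t + x <=? b) && (c <=? t - x) && (t - x <=? d))%Z.

Definition bottom (a b c d : Z) : Pt := ((a + c) / 2, (a - c) / 2)%Z.
Definition top (a b c d : Z) : Pt := ((b + d) / 2, (b - d) / 2)%Z.

Definition inSbar (a b c d : Z) (y : Pt) : bool :=
  let '(t, x) := y in
  (inS a b c d y || inS a b c d (t + 1, x + 1) || inS a b c d (t + 1, x - 1)
   || inS a b c d (t - 1, x + 1) || inS a b c d (t - 1, x - 1))%Z.

Definition inBdry (a b c d : Z) (y : Pt) : bool :=
  inSbar a b c d y && negb (inS a b c d y).

Definition inE (a b c d : Z) (e : Edge) : bool :=
  inS a b c d (fst e) || inS a b c d (upper e).

(* Generated flow field eta(0,xi): recursion in increasing t.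
   gen k y = (eta(e^ne_y), eta(e^se_y)) where k = t - t_min (fuel). *)
Fixpoint gen (a b c d : Z) (xi : Pt -> R) (k : nat) (y : Pt) : R * R :=
  let sw := match k with
            | O => 0
            | S k' => let z := (fst y - 1, snd y - 1)%Z in
                      if inS a b c d z then fst (gen a b c d xi k' z) else 0
            end in
  let nw := match k with
            | O => 0
            | S k' => let z := (fst y - 1, snd y + 1)%Z in
                      if inS a b c d z then snd (gen a b c d xi k' z) else 0
            end in
  (xi y + Rmax 0 (sw - nw), xi y + Rmax 0 (nw - sw)).

(* The generated flow field: edges whose lower endpoint lies outside S
   (in particular boundary inflow edges) carry 0. *)
Definition genflow (a b c d : Z) (xi : Pt -> R) (e : Edge) : R :=
  let '(y, dir) := e in
  if inS a b c d y then
    let p := gen a b c d xi (Z.to_nat (fst y - fst (bottom a b c d))) y in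
    if dir then fst p else snd p
  else 0.

Definition birth (eta : Edge -> R) (y : Pt) : R := Rmin (eta (e_ne y)) (eta (e_se y)).

Definition assoc (eta : Edge -> R) (y : Pt) (f1 : Edge) (p1 : R) (f2 : Edge) (p2 : R) : Prop :=
  0 < p1 <= eta f1 /\ 0 < p2 <= eta f2 /\
  ( (f1 = e_sw y /\ f2 = e_nw y /\ p1 <= Rmin (eta f1) (eta f2) /\ p2 = p1)
  \/ (f1 = e_se y /\ f2 = e_nw y /\ p2 > eta (e_sw y) /\ p1 = p2 - eta (e_sw y))
  \/ (f1 = e_sw y /\ f2 = e_ne y /\ p1 > eta (e_nw y) /\ p2 = p1 - eta (e_nw y))
  \/ (f1 = e_se y /\ f2 = e_ne y /\ p1 > eta f1 - birth eta y /\
      p2 > eta f2 - birth eta y /\ eta f1 - p1 = eta f2 - p2) ).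

(* Broken traces: a start point y0 and a list of steps (true: t+1, false: t-1);
   each step increases x by 1.  n = length of the list. *)
Definition stepZ (b : bool) : Z := if b then 1%Z else (-1)%Z.

Fixpoint tpt (y0 : Pt) (s : list bool) (i : nat) : Pt :=
  match i, s with
  | O, _ => y0
  | S i', bb :: s' => tpt ((fst y0 + stepZ bb)%Z, (snd y0 + 1)%Z) s' i'
  | S _, [] => y0
  end.

(* the edge e_i = <y_{i-1}, y_i>, for 1 <= i <= n *)
Definition tedge (y0 : Pt) (s : list bool) (i : nat) : Edge :=
  if nth (i - 1) s false then (tpt y0 s (i - 1), true) else (tpt y0 s i, false).

Definition Trace := (Pt * list bool)%type.

Definition inC (a b c d : Z) (tr : Trace) : Prop :=
  let '(y0, s) := tr in
  let n := length s in
  (1 <= n)%nat /\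
  inBdry a b c d y0 = true /\ inBdry a b c d (tpt y0 s n) = true /\
  (forall i, (1 <= i <= n - 1)%nat -> inS a b c d (tpt y0 s i) = true) /\
  (forall i, (1 <= i <= n)%nat -> inE a b c d (tedge y0 s i) = true).

(* Lebesgue (outer) measure on R via countable covers by open intervals *)
Definition cover_sum (A : R -> Prop) (l : R) : Prop :=
  exists al bl : nat -> R,
    (forall k, al k <= bl k) /\
    (forall z, A z -> exists k, al k < z < bl k) /\
    infinite_sum (fun k => bl k - al k) l.

Definition is_lebesgue_measure (A : R -> Prop) (m : R) : Prop :=
  (forall l, cover_sum A l -> m <= l) /\
  (forall m', (forall l, cover_sum A l -> m' <= l) -> m' <= m).

Definition lmeasure (A : R -> Prop) : R :=
  epsilon (inhabits 0) (is_lebesgue_measure A).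

Definition weight_set (eta : Edge -> R) (tr : Trace) : R -> Prop :=
  fun p1 =>
    let '(y0, s) := tr in
    0 < p1 <= eta (tedge y0 s 1) /\
    exists p : nat -> R, p 1%nat = p1 /\
      forall i, (2 <= i <= length s)%nat ->
        assoc eta (tpt y0 s (i - 1)) (tedge y0 s (i - 1)) (p (i - 1)%nat)
              (tedge y0 s i) (p i).

Definition weight (eta : Edge -> R) (tr : Trace) : R := lmeasure (weight_set eta tr).

Definition sum_weights (eta : Edge -> R) (L : list Trace) : R :=
  fold_right (fun tr acc => weight eta tr + acc) 0 L.

(* directed up-paths: start point and steps (true: (1,1), false: (1,-1)) *)
Fixpoint ppt (y0 : Pt) (s : list bool) (i : nat) : Pt :=
  match i, s with
  | O, _ => y0
  | S i', bb :: s' => ppt ((fst y0 + 1)%Z, (snd y0 + stepZ bb)%Z) s' i'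
  | S _, [] => y0
  end.

Definition valid_path (a b c d : Z) (s : list bool) : Prop :=
  (forall i, (i <= length s)%nat -> inS a b c d (ppt (bottom a b c d) s i) = true) /\
  ppt (bottom a b c d) s (length s) = top a b c d.

Definition path_sum (a b c d : Z) (xi : Pt -> R) (s : list bool) : R :=
  fold_right Rplus 0 (map (fun i => xi (ppt (bottom a b c d) s i)) (seq 0 (S (length s)))).

From Stdlib Require Import Reals ZArith List Lra Lia Permutation Bool.
From Stdlib Require Import PropExtensionality FunctionalExtensionality ClassicalEpsilon Classical.
Import ListNotations.
Open Scope R_scope.

(* Write eta for the generated flow field and [G y] for the maximal sum of xi
   along an up-right path in S from the bottom of S to y.
   - Weights: the set defining w_eta(l) is a half-open interval
     of first labels (its [window]); an interval's outer measure is its length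
     (finite-subcover argument), so the weight is the window's length.
   - Conservation: where eta satisfies the flow equations, the
     association rule splits the labels of an incoming edge into two intervals
     carried to the two outgoing edges.  Hence the weights of all traces that
     start with a given edge and then escape a region add up to eta on it.
   - Last passage: eta on the edges leaving a point is the
     increment of G, by the dynamic-programming equation of G, and G(top) is
     the largest path sum, attained by a path built backwards.
   - Counting: C(S) is listed explicitly; a crossing trace
     enters S through one edge and escapes.  Edges with lower end outside S
     carry no flow, so the total weight is the flow through the south-east
     edges of the upper-left side of S, which telescopes to G(top). *)

Definition psum (f : nat -> R) (n : nat) : R := fold_right Rplus 0 (map f (seq 0 n)).

Lemma fold_Rplus_app (l1 l2 : list R) :
  fold_right Rplus 0 (l1 ++ l2) = fold_right Rplus 0 l1 + fold_right Rplus 0 l2.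
Proof. induction l1 as [|u l1 IH]; simpl; [lra|]. rewrite IH. lra. Qed.

Lemma psum_S (f : nat -> R) n : psum f (S n) = psum f n + f n.
Proof. unfold psum. rewrite seq_S, map_app, fold_Rplus_app. simpl. lra. Qed.

Lemma psum_ext (f g : nat -> R) n :
  (forall i, (i < n)%nat -> f i = g i) -> psum f n = psum g n.
Proof.
  induction n as [|n IH]; intros H; [reflexivity|].
  rewrite !psum_S, IH by (intros; apply H; lia). rewrite H by lia. reflexivity.
Qed.

Lemma psum_le (f g : nat -> R) n : (forall k, f k <= g k) -> psum f n <= psum g n.
Proof.
  intros H. induction n as [|n IH]; [unfold psum; simpl; lra|].
  rewrite !psum_S. specialize (H n). lra.
Qed.

Lemma psum_mono (f : nat -> R) n m :
  (forall k, 0 <= f k) -> (n <= m)%nat -> psum f n <= psum f m.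
Proof.
  intros Hf Hnm. induction Hnm as [|m _ IH]; [lra|].
  rewrite psum_S. specialize (Hf m). lra.
Qed.

Lemma psum_le_gain (f g : nat -> R) n k0 delta :
  (forall k, f k <= g k) -> (k0 < n)%nat -> f k0 + delta <= g k0 ->
  psum f n + delta <= psum g n.
Proof.
  intros H Hk Hd. induction n as [|n IH]; [lia|]. rewrite !psum_S.
  destruct (Nat.eq_dec k0 n) as [->|Hne].
  - pose proof (psum_le f g n H). lra.
  - specialize (IH ltac:(lia)). specialize (H n). lra.
Qed.

Lemma sum_f_R0_psum (f : nat -> R) n : sum_f_R0 f n = psum f (S n).
Proof.
  induction n as [|n IH].
  - unfold psum. simpl. lra.
  - rewrite psum_S. simpl. rewrite IH. reflexivity.
Qed.

Lemma psum_le_infinite_sum (f : nat -> R) l :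
  (forall k, 0 <= f k) -> infinite_sum f l -> forall N, psum f N <= l.
Proof.
  intros Hf Hs N. destruct (Rle_dec (psum f N) l) as [h|h]; [exact h|]. exfalso.
  destruct (Hs (psum f N - l)) as [N0 HN0]; [lra|].
  specialize (HN0 (max N N0) (Nat.le_max_r _ _)).
  rewrite sum_f_R0_psum in HN0. unfold R_dist in HN0. apply Rabs_def2 in HN0.
  pose proof (psum_mono f N (S (max N N0)) Hf ltac:(lia)). lra.
Qed.

Definition lsum {A} (f : A -> R) (l : list A) : R :=
  fold_right (fun x acc => f x + acc) 0 l.

Lemma lsum_app {A} (f : A -> R) l1 l2 : lsum f (l1 ++ l2) = lsum f l1 + lsum f l2.
Proof. induction l1 as [|u l1 IH]; simpl; [lra|]. unfold lsum in *. simpl. rewrite IH. lra. Qed.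

Lemma lsum_map {A B} (f : B -> R) (g : A -> B) l :
  lsum f (map g l) = lsum (fun x => f (g x)) l.
Proof. induction l as [|u l IH]; [reflexivity|]. unfold lsum in *. simpl. rewrite IH. reflexivity. Qed.

Lemma lsum_ext {A} (f g : A -> R) l :
  (forall x, In x l -> f x = g x) -> lsum f l = lsum g l.
Proof.
  induction l as [|u l IH]; intros H; [reflexivity|]. unfold lsum in *. simpl.
  rewrite H by (left; auto). rewrite IH by (intros; apply H; right; auto). reflexivity.
Qed.

Lemma lsum_zero {A} (f : A -> R) l : (forall x, In x l -> f x = 0) -> lsum f l = 0.
Proof.
  induction l as [|u l IH]; intros H; [reflexivity|]. unfold lsum in *. simpl.
  rewrite H by (left; auto). rewrite IH by (intros; apply H; right; auto). lra.
Qed.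

Lemma lsum_perm {A} (f : A -> R) l1 l2 : Permutation l1 l2 -> lsum f l1 = lsum f l2.
Proof. induction 1; unfold lsum in *; simpl; lra. Qed.

Lemma lsum_flat_map {A B} (f : B -> R) (g : A -> list B) l :
  lsum f (flat_map g l) = lsum (fun x => lsum f (g x)) l.
Proof. induction l as [|u l IH]; [reflexivity|]. simpl. rewrite lsum_app, IH. reflexivity. Qed.

Lemma lsum_telescope (F : Z -> R) n :
  lsum (fun i => F (Z.of_nat i) - F (Z.of_nat i - 1)%Z) (seq 0 n) = F (Z.of_nat n - 1)%Z - F (-1)%Z.
Proof.
  induction n as [|n IH]; [unfold lsum; simpl; lra|].
  rewrite seq_S, lsum_app, IH.
  replace (Z.of_nat (S n) - 1)%Z with (Z.of_nat n) by lia. unfold lsum; simpl. lra.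
Qed.

(** * Lebesgue measure of a half-open interval *)

Lemma lub_above (E : R -> Prop) s m : is_lub E s -> m < s -> exists x, E x /\ m < x.
Proof.
  intros [_ Hlub] Hm. apply NNPP. intros Hno.
  assert (s <= m) by (apply Hlub; intros x Hx; apply Rnot_lt_le; intros Hlt; apply Hno; eauto).
  lra.
Qed.

Section FiniteSubcover.
Variables (al bl : nat -> R) (alpha : R).

Definition clip (x : R) (k : nat) : R := Rmax 0 (Rmin (bl k) x - Rmax (al k) alpha).

(* (alpha, x] is already paid for by finitely many clipped intervals. *)
Definition accounted (x : R) : Prop := exists N, x - alpha <= psum (clip x) N.

Lemma clip_mono x y k : x <= y -> clip x k <= clip y k.
Proof. intros H. unfold clip, Rmax, Rmin. repeat destruct Rle_dec; lra. Qed.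

Lemma accounted_extend k x y :
  accounted x -> Rmax (al k) alpha <= x <= y -> y < bl k -> accounted y.
Proof.
  intros [N1 HN1] Hxy Hy. exists (max N1 (S k)).
  pose proof (psum_mono (clip x) N1 (max N1 (S k))
    (fun k => Rmax_l _ _) (Nat.le_max_l _ _)).
  assert (psum (clip x) (max N1 (S k)) + (y - x) <= psum (clip y) (max N1 (S k))).
  { apply (psum_le_gain _ _ _ k); [intros; apply clip_mono; lra| lia|].
    unfold clip. unfold Rmax, Rmin in *. repeat destruct Rle_dec; lra. }
  lra.
Qed.

(* Proof: the supremum of the points
   up to which everything is accounted can be neither below beta nor uncovered. *)
Lemma finite_subcover_length beta :
  alpha <= beta -> (forall k, al k <= bl k) ->
  (forall z, alpha <= z <= beta -> exists k, al k < z < bl k) ->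
  exists N, beta - alpha <= psum (fun k => bl k - al k) N.
Proof.
  intros Hab Hle Hcov.
  set (E := fun x => alpha <= x <= beta /\ forall y, alpha <= y <= x -> accounted y).
  assert (HEa : E alpha).
  { split; [lra|]. intros y Hy. exists 0%nat. unfold psum; simpl. lra. }
  destruct (completeness E) as [s Hs].
  { exists beta. intros x Hx. apply Hx. }
  { exists alpha. exact HEa. }
  assert (Has : alpha <= s) by (apply Hs; exact HEa).
  assert (Hsb : s <= beta) by (apply Hs; intros x Hx; apply Hx).
  destruct (Hcov s (conj Has Hsb)) as [k0 Hk0].
  assert (Hleft : forall y, alpha <= y <= beta -> y < bl k0 -> accounted y).
  { assert (Hx1 : exists x1, E x1 /\ Rmax (al k0) alpha <= x1).
    { destruct (Rle_dec (al k0) alpha).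
      - exists alpha. split; [exact HEa|]. unfold Rmax; destruct Rle_dec; lra.
      - destruct (lub_above E s (al k0) Hs ltac:(lra)) as [x1 [Hx1 Hlt]].
        exists x1. split; [exact Hx1|]. unfold Rmax; destruct Hx1; destruct Rle_dec; lra. }
    destruct Hx1 as [x1 [[Hx1 Hacc] Hm]]. intros y Hy Hyb.
    destruct (Rle_dec y x1); [apply Hacc; lra|].
    apply (accounted_extend k0 x1); [apply Hacc; lra| lra| lra]. }
  assert (Hs_beta : s = beta).
  { destruct (Rle_dec beta s); [lra|]. exfalso.
    set (x2 := Rmin beta ((s + bl k0) / 2)).
    assert (Hx2 : s < x2 /\ x2 <= beta /\ x2 < bl k0) by (unfold x2, Rmin; destruct Rle_dec; lra).
    assert (E x2) by (split; [lra|]; intros y Hy; apply Hleft; lra).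
    pose proof (proj1 Hs x2 H). lra. }
  destruct (Hleft beta ltac:(lra) ltac:(lra)) as [N HN]. exists N.
  enough (psum (clip beta) N <= psum (fun k => bl k - al k) N) by lra.
  apply psum_le. intros k. specialize (Hle k). unfold clip, Rmax, Rmin. repeat destruct Rle_dec; lra.
Qed.

End FiniteSubcover.

Definition len (l r : R) : R := Rmax 0 (r - l).

Lemma infinite_sum_single (v : R) :
  infinite_sum (fun k => match k with O => v | _ => 0 end) v.
Proof.
  intros eps He. exists 0%nat. intros n _. unfold R_dist.
  replace (sum_f_R0 (fun k => match k with O => v | _ => 0 end) n) with v.
  { rewrite Rminus_diag, Rabs_R0. lra. }
  induction n as [|n IH]; simpl; [reflexivity|]. rewrite <- IH. lra.
Qed.

Lemma cover_by_one (A : R -> Prop) l r :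
  l <= r -> (forall z, A z -> l < z < r) -> cover_sum A (r - l).
Proof.
  intros Hlr HA. exists (fun _ => l), (fun k => match k with O => r | _ => l end).
  split; [intros [|]; lra|]. split; [intros z Hz; exists 0%nat; apply HA; exact Hz|].
  replace (fun k : nat => (match k with O => r | _ => l end) - l)
    with (fun k : nat => match k with O => r - l | _ => 0 end).
  - apply infinite_sum_single.
  - apply functional_extensionality. intros [|]; lra.
Qed.

Lemma interval_cover_lower l r c : cover_sum (fun p => l < p <= r) c -> len l r <= c.
Proof.
  intros [al [bl [Hle [Hcov Hs]]]].
  assert (Hnn : forall k, 0 <= bl k - al k) by (intros k; specialize (Hle k); lra).
  pose proof (psum_le_infinite_sum _ _ Hnn Hs) as Hpart.
  pose proof (Hpart 0%nat) as H0. unfold psum in H0; simpl in H0.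
  unfold len, Rmax. destruct Rle_dec; [|exact H0].
  destruct (Rle_dec (r - l) c) as [h|h]; [exact h|]. exfalso.
  set (eps := (r - l - c) / 2).
  destruct (finite_subcover_length al bl (l + eps) r) as [N HN];
    [unfold eps; lra| exact Hle| intros z Hz; apply Hcov; unfold eps in *; lra|].
  specialize (Hpart N). unfold eps in *. lra.
Qed.

(* The outer measure of (l, r] is its length; the upper bound uses single
   slightly enlarged intervals as covers. *)
Lemma interval_measure (l r : R) : is_lebesgue_measure (fun p => l < p <= r) (len l r).
Proof.
  split; [apply interval_cover_lower|].
  intros m Hm. unfold len, Rmax. destruct Rle_dec.
  - destruct (Rle_dec m (r - l)) as [h|h]; [exact h|]. exfalso.
    set (eps := (m - (r - l)) / 2).
    assert (Hc : cover_sum (fun p => l < p <= r) (r + eps - l)).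
    { apply cover_by_one; intros; unfold eps in *; lra. }
    specialize (Hm _ Hc). unfold eps in Hm. lra.
  - replace 0 with (l - l) by lra. apply Hm, cover_by_one; intros; lra.
Qed.

Lemma lmeasure_unique (A : R -> Prop) m : is_lebesgue_measure A m -> lmeasure A = m.
Proof.
  intros Hm. unfold lmeasure.
  destruct (epsilon_spec (inhabits 0) (is_lebesgue_measure A) (ex_intro _ m Hm)) as [H3 H4].
  destruct Hm as [H1 H2]. apply Rle_antisym; [apply H2, H3| apply H4, H1].
Qed.

Lemma lmeasure_interval (A : R -> Prop) l r :
  (forall p, A p <-> l < p <= r) -> lmeasure A = len l r.
Proof.
  intros H. replace A with (fun p => l < p <= r).
  - apply lmeasure_unique, interval_measure.
  - apply functional_extensionality. intros p. apply propositional_extensionality. symmetry; auto.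
Qed.

Definition next (y : Pt) (b : bool) : Pt := ((fst y + stepZ b)%Z, (snd y + 1)%Z).
Definition prev (y : Pt) (b : bool) : Pt := ((fst y - stepZ b)%Z, (snd y - 1)%Z).

Definition edge (y : Pt) (b : bool) : Edge := if b then (y, true) else (next y b, false).

Lemma prev_next y b : prev (next y b) b = y.
Proof. destruct y as [t x]. unfold prev, next. simpl. f_equal; lia. Qed.

Lemma next_prev y b : next (prev y b) b = y.
Proof. destruct y as [t x]. unfold prev, next. simpl. f_equal; lia. Qed.

Lemma edge_true_in y : edge y true = e_sw (next y true).
Proof. destruct y as [t x]. unfold edge, e_sw, next; simpl. repeat f_equal; lia. Qed.

Lemma edge_false_in y : edge y false = e_se (next y false).
Proof. reflexivity. Qed.

Lemma edge_true_out y : edge y true = e_ne y.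
Proof. reflexivity. Qed.

Lemma edge_false_out y : edge y false = e_nw y.
Proof. destruct y as [t x]. unfold edge, e_nw, next; simpl. repeat f_equal; lia. Qed.

(* For the step [b] into [y1 = next y0 b] followed by the step [b'] out of [y1],
   a label [p] on the incoming edge is associated with [p + assoc_shift] on the
   outgoing one, provided [assoc_lo < p <= assoc_hi]. *)
Definition assoc_lo (eta : Edge -> R) (y0 : Pt) (b b' : bool) : R :=
  let y1 := next y0 b in
  match b, b' with
  | _, false => 0
  | true, true => eta (e_nw y1)
  | false, true => eta (edge y0 b) - birth eta y1
  end.

Definition assoc_hi (eta : Edge -> R) (y0 : Pt) (b b' : bool) : R :=
  let y1 := next y0 b in
  match b, b' with
  | true, false => Rmin (eta (edge y0 b)) (eta (edge y1 b'))
  | _, _ => eta (edge y0 b)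
  end.

Definition assoc_shift (eta : Edge -> R) (y0 : Pt) (b b' : bool) : R :=
  let y1 := next y0 b in
  match b, b' with
  | true, false => 0
  | false, false => eta (e_sw y1)
  | true, true => - eta (e_nw y1)
  | false, true => eta (edge y1 b') - eta (edge y0 b)
  end.

Lemma assoc_step eta y0 b b' p p2 :
  assoc eta (next y0 b) (edge y0 b) p (edge (next y0 b) b') p2 <->
  0 < p <= eta (edge y0 b) /\ 0 < p2 <= eta (edge (next y0 b) b') /\
  assoc_lo eta y0 b b' < p <= assoc_hi eta y0 b b' /\ p2 = p + assoc_shift eta y0 b b'.
Proof.
  unfold assoc, assoc_lo, assoc_hi, assoc_shift. set (y1 := next y0 b).
  destruct b, b';
  [ rewrite (edge_true_out y1), (edge_true_in y0) | rewrite (edge_false_out y1), (edge_true_in y0)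
  | rewrite (edge_true_out y1), (edge_false_in y0) | rewrite (edge_false_out y1), (edge_false_in y0) ];
  fold y1; unfold e_sw, e_se, e_ne, e_nw;
  (split; [intros [H1 [H2 H3]]; split; [exact H1|]; split; [exact H2|];
     repeat destruct H3 as [H3|H3]; destruct H3 as [E1 [E2 H3]];
     try (injection E1; intros; discriminate); try (injection E2; intros; discriminate);
     split; lra
   | intros [H1 [H2 [H3 H4]]]; split; [exact H1|]; split; [exact H2|] ]).
  - right; right; left. repeat split; lra.
  - left. repeat split; lra.
  - right; right; right. repeat split; lra.
  - right; left. repeat split; lra.
Qed.

Lemma tpt_0 y0 s : tpt y0 s 0 = y0.
Proof. destruct s; reflexivity. Qed.

Lemma tpt_cons y0 b s i : tpt y0 (b :: s) (S i) = tpt (next y0 b) s i.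
Proof. reflexivity. Qed.

Lemma tpt_S y0 s i : (i < length s)%nat -> tpt y0 s (S i) = next (tpt y0 s i) (nth i s false).
Proof.
  revert y0 i. induction s as [|b s IH]; intros y0 i Hi; simpl in Hi; [lia|].
  destruct i as [|i]; [rewrite tpt_cons, !tpt_0; reflexivity|].
  rewrite !tpt_cons, IH by lia. reflexivity.
Qed.

Lemma tpt_snd y s i : (i <= length s)%nat -> snd (tpt y s i) = (snd y + Z.of_nat i)%Z.
Proof.
  revert y i. induction s as [|b s IH]; intros y i Hi.
  - simpl in Hi. replace i with 0%nat by lia. rewrite tpt_0. simpl. lia.
  - destruct i; [rewrite tpt_0; simpl; lia|]. rewrite tpt_cons, IH by (simpl in Hi; lia).
    unfold next. simpl. lia.
Qed.

Lemma tedge_1 y0 b s : tedge y0 (b :: s) 1 = edge y0 b.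
Proof. unfold tedge, edge. simpl. rewrite tpt_0. destruct b; reflexivity. Qed.

Lemma tedge_cons y0 b s i : (1 <= i)%nat -> tedge y0 (b :: s) (S i) = tedge (next y0 b) s i.
Proof.
  intros Hi. unfold tedge. replace (S i - 1)%nat with (S (i - 1)) by lia. reflexivity.
Qed.

(** * The weight of a trace is the length of an interval *)

Lemma weight_set_single eta y0 b p : weight_set eta (y0, [b]) p <-> 0 < p <= eta (edge y0 b).
Proof.
  unfold weight_set. rewrite tedge_1. split; [tauto|].
  intros H. split; [exact H|]. exists (fun _ => p). split; [reflexivity|].
  intros i Hi. simpl in Hi. lia.
Qed.

Lemma weight_set_cons eta y0 b b' s p :
  weight_set eta (y0, b :: b' :: s) p <->
  exists p2, assoc eta (next y0 b) (edge y0 b) p (edge (next y0 b) b') p2 /\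
             weight_set eta (next y0 b, b' :: s) p2.
Proof.
  unfold weight_set. rewrite !tedge_1. split.
  - intros [Hp [q [Hq Hall]]].
    assert (Ha := Hall 2%nat ltac:(simpl; lia)). simpl in Ha.
    rewrite tedge_1, (tedge_cons y0 b (b' :: s) 1), tedge_1, Hq in Ha by lia.
    exists (q 2%nat). split; [exact Ha|]. split; [apply Ha|].
    exists (fun i => q (S i)). split; [reflexivity|].
    intros i Hi. simpl in Hi. destruct i as [|j]; [lia|].
    specialize (Hall (S (S j)) ltac:(simpl; lia)).
    replace (S (S j) - 1)%nat with (S j) in Hall by lia.
    rewrite tpt_cons, (tedge_cons y0 b _ (S j)), (tedge_cons y0 b _ j) in Hall by lia.
    replace (S j - 1)%nat with j by lia. exact Hall.
  - intros [p2 [Ha [Hp2 [q [Hq Hall]]]]]. split; [apply Ha|].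
    exists (fun i => match i with O | S O => p | S i' => q i' end). split; [reflexivity|].
    intros i Hi. simpl in Hi. destruct i as [|[|[|i]]]; try lia.
    + simpl. rewrite tedge_1, (tedge_cons y0 b (b' :: s) 1), tedge_1, Hq by lia. exact Ha.
    + specialize (Hall (S (S i)) ltac:(simpl; lia)).
      replace (S (S (S i)) - 1)%nat with (S (S i)) by lia.
      rewrite tpt_cons, (tedge_cons y0 b _ (S (S i))), (tedge_cons y0 b _ (S i)) by lia.
      replace (S (S i) - 1)%nat with (S i) in Hall by lia. destruct i; exact Hall.
Qed.

(* The interval (lo, hi] of admissible first labels of the trace from [y0]
   with steps [s]: a label must be positive, fit on its edge and be carried
   along every association. *)
Fixpoint window (eta : Edge -> R) (y0 : Pt) (s : list bool) : R * R :=
  match s with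
  | [] => (0, 0)
  | [b] => (0, eta (edge y0 b))
  | b :: ((b' :: _) as s') =>
    let w := window eta (next y0 b) s' in
    let c := assoc_shift eta y0 b b' in
    (Rmax (Rmax 0 (assoc_lo eta y0 b b')) (Rmax (fst w - c) (0 - c)),
     Rmin (Rmin (eta (edge y0 b)) (assoc_hi eta y0 b b'))
          (Rmin (snd w - c) (eta (edge (next y0 b) b') - c)))
  end.

Lemma window_cons2 eta y0 b b' s : window eta y0 (b :: b' :: s) =
  (Rmax (Rmax 0 (assoc_lo eta y0 b b'))
        (Rmax (fst (window eta (next y0 b) (b' :: s)) - assoc_shift eta y0 b b')
              (0 - assoc_shift eta y0 b b')),
   Rmin (Rmin (eta (edge y0 b)) (assoc_hi eta y0 b b'))
        (Rmin (snd (window eta (next y0 b) (b' :: s)) - assoc_shift eta y0 b b')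
              (eta (edge (next y0 b) b') - assoc_shift eta y0 b b'))).
Proof. reflexivity. Qed.

Lemma Rmax_lt_iff u v p : Rmax u v < p <-> u < p /\ v < p.
Proof. unfold Rmax; destruct Rle_dec; split; intros; try split; try lra; tauto. Qed.

Lemma Rmin_ge_iff u v p : p <= Rmin u v <-> p <= u /\ p <= v.
Proof. unfold Rmin; destruct Rle_dec; split; intros; try split; try lra; tauto. Qed.

Lemma weight_set_window eta y0 s p : s <> [] ->
  (weight_set eta (y0, s) p <-> fst (window eta y0 s) < p <= snd (window eta y0 s)).
Proof.
  revert y0 p. induction s as [|b s IH]; intros y0 p Hne; [congruence|].
  destruct s as [|b' s]; [rewrite weight_set_single; simpl; tauto|].
  rewrite weight_set_cons, window_cons2. cbn [fst snd].
  rewrite !Rmax_lt_iff, !Rmin_ge_iff. split.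
  - intros [p2 [Ha Hw]]. apply assoc_step in Ha. apply IH in Hw; [|congruence].
    destruct Ha as [H1 [H2 [H3 ->]]]. lra.
  - intros H. exists (p + assoc_shift eta y0 b b'). rewrite assoc_step, IH by congruence. lra.
Qed.

Lemma weight_window eta y0 s : s <> [] ->
  weight eta (y0, s) = len (fst (window eta y0 s)) (snd (window eta y0 s)).
Proof. intros Hne. apply lmeasure_interval. intros p. apply weight_set_window, Hne. Qed.

Lemma window_bounds eta y0 b s :
  0 <= fst (window eta y0 (b :: s)) /\ snd (window eta y0 (b :: s)) <= eta (edge y0 b).
Proof.
  destruct s as [|b' s]; [simpl; lra|]. rewrite window_cons2. cbn [fst snd]. split.
  - eapply Rle_trans; [|apply Rmax_l]. apply Rmax_l.
  - eapply Rle_trans; [apply Rmin_l|]. apply Rmin_l.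
Qed.

(** * Conservation of weight *)

Lemma len_translate l1 r1 l2 r2 c :
  (forall p, l1 < p <= r1 <-> l2 < p + c <= r2) -> len l1 r1 = len l2 r2.
Proof.
  intros H. unfold len.
  destruct (Rle_dec r1 l1) as [h1|h1]; destruct (Rle_dec r2 l2) as [h2|h2].
  - unfold Rmax; repeat destruct Rle_dec; lra.
  - exfalso. assert (Hr : l2 < (r2 - c) + c <= r2) by lra. apply H in Hr. lra.
  - exfalso. assert (Hr : l1 < r1 <= r1) by lra. apply H in Hr. lra.
  - assert (Hr1 : l1 < r1 <= r1) by lra. apply H in Hr1.
    assert (Hr2 : l2 < (r2 - c) + c <= r2) by lra. apply H in Hr2.
    assert (Hl : l1 + c = l2).
    { destruct (Rtotal_order (l1 + c) l2) as [h|[h|h]]; [|exact h|].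
      - assert (Hp : l1 < l2 - c <= r1) by lra. apply H in Hp. lra.
      - assert (Hp : l1 < l1 <= r1) by (apply H; lra). lra. }
    f_equal. lra.
Qed.

Lemma len_split l r lo m hi :
  lo <= m <= hi ->
  len (Rmax l lo) (Rmin r m) + len (Rmax l m) (Rmin r hi) = len (Rmax l lo) (Rmin r hi).
Proof. intros H. unfold len, Rmax, Rmin. repeat destruct Rle_dec; lra. Qed.

Ltac interval_cases :=
  let q := fresh "q" in intros q;
  rewrite ?Rmax_lt_iff, ?Rmin_ge_iff;
  unfold birth, Rmin, Rmax in *; repeat destruct Rle_dec; intuition lra.

(* Labels of the incoming edge [edge y0 b] that lie in (l, r] and are carried
   to the outgoing edge [edge (next y0 b) b'] form, after the shift, the
   interval (step_lo l, step_hi r]. *)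
Definition step_lo (eta : Edge -> R) (y0 : Pt) (b b' : bool) (l : R) : R :=
  let c := assoc_shift eta y0 b b' in
  Rmax (Rmax (l + c) (Rmax c (assoc_lo eta y0 b b' + c))) 0.

Definition step_hi (eta : Edge -> R) (y0 : Pt) (b b' : bool) (r : R) : R :=
  let c := assoc_shift eta y0 b b' in
  Rmin (Rmin (r + c) (Rmin (eta (edge y0 b) + c) (assoc_hi eta y0 b b' + c)))
       (eta (edge (next y0 b) b')).

Lemma window_step eta y0 b b' s l r :
  len (Rmax l (fst (window eta y0 (b :: b' :: s)))) (Rmin r (snd (window eta y0 (b :: b' :: s))))
  = len (Rmax (step_lo eta y0 b b' l) (fst (window eta (next y0 b) (b' :: s))))
        (Rmin (step_hi eta y0 b b' r) (snd (window eta (next y0 b) (b' :: s)))).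
Proof.
  rewrite window_cons2. apply (len_translate _ _ _ _ (assoc_shift eta y0 b b')).
  unfold step_lo, step_hi. cbn [fst snd]. interval_cases.
Qed.

Definition flow_ok (eta : Edge -> R) (x : R) (y : Pt) : Prop :=
  0 <= eta (e_sw y) /\ 0 <= eta (e_nw y) /\ 0 <= x /\
  eta (e_ne y) = x + Rmax 0 (eta (e_sw y) - eta (e_nw y)) /\
  eta (e_se y) = x + Rmax 0 (eta (e_nw y) - eta (e_sw y)).

(* Conservation at a point: the association splits the labels (0, eta e] of
   an incoming edge [e] into two intervals, carried to the two outgoing edges. *)
Lemma association_splits eta y0 b x l r : flow_ok eta x (next y0 b) ->
  len (Rmax (step_lo eta y0 b true l) 0)
      (Rmin (step_hi eta y0 b true r) (eta (edge (next y0 b) true)))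
  + len (Rmax (step_lo eta y0 b false l) 0)
        (Rmin (step_hi eta y0 b false r) (eta (edge (next y0 b) false)))
  = len (Rmax l 0) (Rmin r (eta (edge y0 b))).
Proof.
  set (y1 := next y0 b). intros [Hsw [Hnw [Hx [Hne Hse]]]].
  unfold step_lo, step_hi, assoc_lo, assoc_hi, assoc_shift. fold y1.
  rewrite (edge_true_out y1), (edge_false_out y1). destruct b.
  - rewrite (edge_true_in y0). fold y1.
    set (m := Rmin (eta (e_sw y1)) (eta (e_nw y1))).
    rewrite <- (len_split l r 0 m (eta (e_sw y1))) by (unfold m, Rmin; destruct Rle_dec; lra).
    rewrite Rplus_comm. f_equal.
    + apply (len_translate _ _ _ _ 0). unfold m. interval_cases.
    + apply (len_translate _ _ _ _ (eta (e_nw y1))). unfold m. interval_cases.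
  - rewrite (edge_false_in y0). fold y1.
    set (m := Rmax 0 (eta (e_nw y1) - eta (e_sw y1))).
    rewrite <- (len_split l r 0 m (eta (e_se y1))) by (unfold m, Rmax in *; repeat destruct Rle_dec; lra).
    rewrite Rplus_comm. f_equal.
    + apply (len_translate _ _ _ _ (- eta (e_sw y1))). unfold m. interval_cases.
    + apply (len_translate _ _ _ _ (eta (e_se y1) - eta (e_ne y1))). unfold m. interval_cases.
Qed.

Definition escapes (ins : Pt -> bool) (y : Pt) (s : list bool) : Prop :=
  (forall i, (i < length s)%nat -> ins (tpt y s i) = true) /\ ins (tpt y s (length s)) = false.

Fixpoint tails (ins : Pt -> bool) (n : nat) (y : Pt) : list (list bool) :=
  if ins y then
    match n with
    | O => []
    | S n' => map (cons true) (tails ins n' (next y true)) ++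
              map (cons false) (tails ins n' (next y false))
    end
  else [[]].

Lemma tails_sound ins n y s : In s (tails ins n y) -> escapes ins y s.
Proof.
  revert y s. induction n as [|n IH]; intros y s Hs; simpl in Hs; destruct (ins y) eqn:E.
  - destruct Hs.
  - destruct Hs as [<-|[]]. split; [intros i Hi; simpl in Hi; lia| exact E].
  - apply in_app_iff in Hs. rewrite !in_map_iff in Hs.
    destruct Hs as [[s' [<- Hs']]|[s' [<- Hs']]]; apply IH in Hs'; destruct Hs' as [H1 H2];
    (split; [intros [|i] Hi; [rewrite tpt_0; exact E| apply H1; simpl in Hi; lia]| exact H2]).
  - destruct Hs as [<-|[]]. split; [intros i Hi; simpl in Hi; lia| exact E].
Qed.

Lemma tails_complete ins s y n : escapes ins y s -> (length s <= n)%nat -> In s (tails ins n y).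
Proof.
  revert y n. induction s as [|b s IH]; intros y n [H1 H2] Hn.
  - simpl in H2. destruct n; simpl; rewrite H2; left; reflexivity.
  - assert (Ey : ins y = true) by (apply (H1 0%nat); simpl; lia).
    destruct n as [|n]; [simpl in Hn; lia|]. simpl. rewrite Ey.
    assert (Ht : In s (tails ins n (next y b))).
    { apply IH; [split|simpl in Hn; lia].
      - intros i Hi. apply (H1 (S i)). simpl. lia.
      - exact H2. }
    apply in_app_iff. destruct b; [left|right]; apply in_map; exact Ht.
Qed.

Lemma NoDup_map_injective {A B} (f : A -> B) l :
  (forall x y, f x = f y -> x = y) -> NoDup l -> NoDup (map f l).
Proof. intros Hf. apply NoDup_map_NoDup_ForallPairs. intros x y _ _. apply Hf. Qed.

Lemma tails_nodup ins n y : NoDup (tails ins n y).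
Proof.
  revert y. induction n as [|n IH]; intros y; simpl; destruct (ins y);
    try (repeat constructor; simpl; tauto).
  apply NoDup_app; try (apply NoDup_map_injective; [intros u v h; injection h; auto| apply IH]).
  intros z h1 h2. apply in_map_iff in h1, h2.
  destruct h1 as [u [<- _]]. destruct h2 as [v [h _]]. discriminate.
Qed.

Section Conservation.
Variable ins : Pt -> bool.
Variable eta : Edge -> R.
Variable X : Z.
Hypothesis flow_in_region : forall y, ins y = true -> exists x, flow_ok eta x y.
Hypothesis region_bounded : forall y, ins y = true -> (snd y < X)%Z.

(* Conservation of weight: the windows of all continuations that escape the
   region after the step [b] from [y0] partition the labels of [edge y0 b]. *)
Lemma sum_escaping_windows n y0 b l r :
  (X <= snd (next y0 b) + Z.of_nat n)%Z ->
  lsum (fun s => len (Rmax l (fst (window eta y0 (b :: s))))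
                     (Rmin r (snd (window eta y0 (b :: s)))))
       (tails ins n (next y0 b))
  = len (Rmax l 0) (Rmin r (eta (edge y0 b))).
Proof.
  revert y0 b l r. induction n as [|n IH]; intros y0 b l r Hn; simpl tails;
    destruct (ins (next y0 b)) eqn:Hin; try (unfold lsum; simpl; lra).
  - specialize (region_bounded _ Hin). lia.
  - rewrite lsum_app, !lsum_map.
    rewrite (lsum_ext _ _ _ (fun s _ => window_step eta y0 b true s l r)).
    rewrite (lsum_ext _ _ _ (fun s _ => window_step eta y0 b false s l r)).
    rewrite !IH by (unfold next in *; simpl in *; lia).
    destruct (flow_in_region _ Hin) as [x Hx]. apply (association_splits eta y0 b x l r Hx).
Qed.

End Conservation.

(** * The rectangle, its generated flow and last-passage values *)

Ltac zlia := Z.to_euclidean_division_equations; lia.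

Section Rectangle.
Variables a b c d : Z.
Variable xi : Pt -> R.
Hypothesis xi_nonneg : forall y, inS a b c d y = true -> 0 <= xi y.

Lemma inS_iff t x : inS a b c d (t, x) = true <->
  ((exists k, t + x = 2 * k) /\ a <= t + x <= b /\ c <= t - x <= d)%Z.
Proof.
  unfold inS. rewrite !andb_true_iff, !Z.leb_le, Z.even_spec. unfold Z.Even. tauto.
Qed.

Lemma inS_false t x : inS a b c d (t, x) = false <->
  ~ ((exists k, t + x = 2 * k) /\ a <= t + x <= b /\ c <= t - x <= d)%Z.
Proof. rewrite <- inS_iff. destruct (inS a b c d (t, x)); split; congruence. Qed.

Definition level (y : Pt) : nat := Z.to_nat (fst y - fst (bottom a b c d)).

Lemma level_pred t x n : inS a b c d (t, x) = true -> level (t, x) = S n ->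
  forall x', level ((t - 1)%Z, x') = n.
Proof. unfold level, bottom. simpl. intros H Hn x'. apply inS_iff in H. zlia. Qed.

Lemma level_zero_below t x : inS a b c d (t, x) = true -> level (t, x) = 0%nat ->
  forall x', inS a b c d ((t - 1)%Z, x') = false.
Proof.
  unfold level, bottom. simpl. intros H Hn x'. apply inS_false. intros Hb.
  apply inS_iff in H. zlia.
Qed.

Lemma outside_below_sw t x : inS a b c d (t, x) = true ->
  inS a b c d ((t - 1)%Z, (x - 1)%Z) = false -> inS a b c d ((t - 2)%Z, x) = false.
Proof.
  rewrite !inS_false, inS_iff. intros [[k Hk] H] Hout Hb. apply Hout.
  split; [exists (k - 1)%Z|]; lia.
Qed.

Lemma outside_below_nw t x : inS a b c d (t, x) = true ->
  inS a b c d ((t - 1)%Z, (x + 1)%Z) = false -> inS a b c d ((t - 2)%Z, x) = false.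
Proof.
  rewrite !inS_false, inS_iff. intros [[k Hk] H] Hout Hb. apply Hout.
  split; [exists k|]; lia.
Qed.

Lemma genflow_outside y dir : inS a b c d y = false -> genflow a b c d xi (y, dir) = 0.
Proof. intros H. unfold genflow. rewrite H. reflexivity. Qed.

Lemma genflow_unfold t x : inS a b c d (t, x) = true ->
  genflow a b c d xi (e_ne (t, x)) =
    xi (t, x) + Rmax 0 (genflow a b c d xi (e_sw (t, x)) - genflow a b c d xi (e_nw (t, x))) /\
  genflow a b c d xi (e_se (t, x)) =
    xi (t, x) + Rmax 0 (genflow a b c d xi (e_nw (t, x)) - genflow a b c d xi (e_sw (t, x))).
Proof.
  intros Hin. unfold e_ne, e_se, e_sw, e_nw, genflow. cbn [fst snd]. rewrite Hin.
  change (Z.to_nat (t - fst (bottom a b c d))) with (level (t, x)).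
  change (Z.to_nat (t - 1 - fst (bottom a b c d))) with (level ((t - 1)%Z, (x - 1)%Z)).
  change (level ((t - 1)%Z, (x - 1)%Z)) with (level ((t - 1)%Z, (x + 1)%Z)) at 2.
  destruct (level (t, x)) eqn:Hk.
  - rewrite !(level_zero_below t x Hin Hk). split; reflexivity.
  - rewrite !(level_pred t x n Hin Hk). split; reflexivity.
Qed.

Lemma genflow_nonneg e : 0 <= genflow a b c d xi e.
Proof.
  destruct e as [y dir]. unfold genflow. destruct (inS a b c d y) eqn:E; [|lra].
  pose proof (xi_nonneg y E).
  destruct (Z.to_nat _); destruct dir; simpl; apply Rplus_le_le_0_compat; auto; apply Rmax_l.
Qed.

Lemma genflow_flow_ok y : inS a b c d y = true -> flow_ok (genflow a b c d xi) (xi y) y.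
Proof.
  destruct y as [t x]. intros H. destruct (genflow_unfold t x H) as [H1 H2].
  repeat split; auto using genflow_nonneg.
Qed.

(* Last-passage values: [G y] is the maximal sum of [xi] along an up-right
   path in the rectangle from its bottom to [y] (0 outside the rectangle),
   computed by the recursion [lpp] with the level of [y] as fuel. *)
Fixpoint lpp (k : nat) (y : Pt) : R :=
  if inS a b c d y then
    xi y + match k with
           | O => 0
           | S k' => Rmax (lpp k' ((fst y - 1)%Z, (snd y - 1)%Z))
                          (lpp k' ((fst y - 1)%Z, (snd y + 1)%Z))
           end
  else 0.

Definition G (y : Pt) : R := lpp (level y) y.

Lemma G_outside y : inS a b c d y = false -> G y = 0.
Proof. intros H. unfold G. destruct (level y); simpl; rewrite H; reflexivity. Qed.

Lemma G_nonneg y : 0 <= G y.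
Proof.
  unfold G. generalize (level y). intros k. revert y.
  induction k as [|k IH]; intros y; simpl; destruct (inS a b c d y) eqn:E; try lra;
    pose proof (xi_nonneg y E); [lra|].
  pose proof (IH ((fst y - 1)%Z, (snd y - 1)%Z)).
  pose proof (Rmax_l (lpp k ((fst y - 1)%Z, (snd y - 1)%Z)) (lpp k ((fst y - 1)%Z, (snd y + 1)%Z))).
  lra.
Qed.

Lemma G_unfold t x : inS a b c d (t, x) = true ->
  G (t, x) = xi (t, x) + Rmax (G ((t - 1)%Z, (x - 1)%Z)) (G ((t - 1)%Z, (x + 1)%Z)).
Proof.
  intros Hin. unfold G at 1. destruct (level (t, x)) eqn:Hk; cbn [lpp fst snd]; rewrite Hin.
  - rewrite !G_outside by apply (level_zero_below t x Hin Hk).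
    unfold Rmax; destruct Rle_dec; lra.
  - unfold G. rewrite !(level_pred t x n Hin Hk). reflexivity.
Qed.

Definition flow_is_increment (t x : Z) : Prop :=
  genflow a b c d xi (e_ne (t, x)) = G (t, x) - G ((t - 1)%Z, (x + 1)%Z) /\
  genflow a b c d xi (e_se (t, x)) = G (t, x) - G ((t - 1)%Z, (x - 1)%Z).

Lemma flow_increment_step t x : inS a b c d (t, x) = true ->
  (forall x', inS a b c d ((t - 1)%Z, x') = true -> flow_is_increment (t - 1) x') ->
  flow_is_increment t x.
Proof.
  intros Hin IH.
  assert (Hsw : genflow a b c d xi (e_sw (t, x)) =
                G ((t - 1)%Z, (x - 1)%Z) - G ((t - 2)%Z, x)).
  { change (e_sw (t, x)) with (e_ne ((t - 1)%Z, (x - 1)%Z)).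
    destruct (inS a b c d ((t - 1)%Z, (x - 1)%Z)) eqn:E.
    - destruct (IH _ E) as [IH1 _]. rewrite IH1. do 3 f_equal; lia.
    - unfold e_ne. rewrite genflow_outside, !G_outside by auto using outside_below_sw. lra. }
  assert (Hnw : genflow a b c d xi (e_nw (t, x)) =
                G ((t - 1)%Z, (x + 1)%Z) - G ((t - 2)%Z, x)).
  { change (e_nw (t, x)) with (e_se ((t - 1)%Z, (x + 1)%Z)).
    destruct (inS a b c d ((t - 1)%Z, (x + 1)%Z)) eqn:E.
    - destruct (IH _ E) as [_ IH1]. rewrite IH1. do 3 f_equal; lia.
    - unfold e_se. rewrite genflow_outside, !G_outside by auto using outside_below_nw. lra. }
  destruct (genflow_unfold t x Hin) as [Hne Hse].
  unfold flow_is_increment. rewrite (G_unfold t x Hin), Hne, Hse, Hsw, Hnw.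
  unfold Rmax; split; repeat destruct Rle_dec; lra.
Qed.

Lemma flow_increment t x : inS a b c d (t, x) = true -> flow_is_increment t x.
Proof.
  remember (level (t, x)) as n eqn:Hn. revert t x Hn.
  induction n as [|n IH]; intros t x Hn Hin; apply flow_increment_step; auto.
  - intros x' H'. rewrite (level_zero_below t x Hin (eq_sym Hn)) in H'. discriminate.
  - intros x' H'. apply IH; [symmetry; apply (level_pred t x n Hin (eq_sym Hn))| exact H'].
Qed.


Definition up (y : Pt) (b : bool) : Pt := ((fst y + 1)%Z, (snd y + stepZ b)%Z).

Lemma ppt_0 y0 s : ppt y0 s 0 = y0.
Proof. destruct s; reflexivity. Qed.

Lemma ppt_app_le y0 s s' i : (i <= length s)%nat -> ppt y0 (s ++ s') i = ppt y0 s i.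
Proof.
  revert y0 i. induction s as [|bb s IH]; intros y0 i Hi; simpl in Hi.
  - replace i with 0%nat by lia. rewrite !ppt_0. reflexivity.
  - destruct i; [rewrite !ppt_0; reflexivity|]. apply IH. lia.
Qed.

Lemma ppt_app_last y0 s bb : ppt y0 (s ++ [bb]) (S (length s)) = up (ppt y0 s (length s)) bb.
Proof. revert y0. induction s as [|bb' s IH]; intros y0; [reflexivity| apply IH]. Qed.

Lemma path_sum_snoc s bb :
  path_sum a b c d xi (s ++ [bb]) =
  path_sum a b c d xi s + xi (up (ppt (bottom a b c d) s (length s)) bb).
Proof.
  unfold path_sum. rewrite length_app, Nat.add_1_r.
  change (psum (fun i => xi (ppt (bottom a b c d) (s ++ [bb]) i)) (S (S (length s))) =
          psum (fun i => xi (ppt (bottom a b c d) s i)) (S (length s)) +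
          xi (up (ppt (bottom a b c d) s (length s)) bb)).
  rewrite psum_S, ppt_app_last. f_equal.
  apply psum_ext. intros i Hi. rewrite ppt_app_le by lia. reflexivity.
Qed.

Definition path_inside (s : list bool) : Prop :=
  forall i, (i <= length s)%nat -> inS a b c d (ppt (bottom a b c d) s i) = true.

Lemma path_inside_snoc s bb : path_inside (s ++ [bb]) ->
  path_inside s /\ inS a b c d (up (ppt (bottom a b c d) s (length s)) bb) = true.
Proof.
  intros H. split.
  - intros i Hi. rewrite <- (ppt_app_le _ s [bb]) by lia. apply H. rewrite length_app. lia.
  - rewrite <- ppt_app_last. apply H. rewrite length_app. simpl. lia.
Qed.

Lemma path_sum_le_G s : path_inside s ->
  path_sum a b c d xi s <= G (ppt (bottom a b c d) s (length s)).
Proof.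
  induction s as [|bb s IH] using rev_ind; intros Hin.
  - specialize (Hin 0%nat ltac:(simpl; lia)). rewrite ppt_0 in Hin.
    unfold path_sum. cbn [length seq map fold_right]. rewrite ppt_0.
    destruct (bottom a b c d) as [t x]. rewrite (G_unfold t x Hin).
    pose proof (G_nonneg ((t - 1)%Z, (x - 1)%Z)).
    pose proof (Rmax_l (G ((t - 1)%Z, (x - 1)%Z)) (G ((t - 1)%Z, (x + 1)%Z))). lra.
  - apply path_inside_snoc in Hin as [Hs Hup]. specialize (IH Hs).
    rewrite path_sum_snoc, length_app, Nat.add_1_r, ppt_app_last.
    destruct (ppt (bottom a b c d) s (length s)) as [t x].
    unfold up in *. cbn [fst snd] in *. rewrite (G_unfold _ _ Hup).
    replace (t + 1 - 1)%Z with t by lia.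
    destruct bb; cbn [stepZ].
    + replace (x + 1 - 1)%Z with x by lia.
      pose proof (Rmax_l (G (t, x)) (G (t, (x + 1 + 1)%Z))). lra.
    + replace (x + -1 + 1)%Z with x by lia.
      pose proof (Rmax_r (G (t, (x + -1 - 1)%Z)) (G (t, x))). lra.
Qed.

Hypotheses (a_even : Z.even a = true) (c_even : Z.even c = true).

Lemma some_predecessor t x n : inS a b c d (t, x) = true -> level (t, x) = S n ->
  inS a b c d ((t - 1)%Z, (x - 1)%Z) = true \/ inS a b c d ((t - 1)%Z, (x + 1)%Z) = true.
Proof.
  unfold level, bottom. cbn [fst]. rewrite !inS_iff. intros [[k Hk] H] Hn.
  pose proof a_even as HA. pose proof c_even as HC. apply Z.even_spec in HA, HC.
  destruct HA as [A HA], HC as [C HC].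
  destruct (Z.eq_dec (t + x) a).
  - right. split; [exists k|]; zlia.
  - left. split; [exists (k - 1)%Z|]; zlia.
Qed.

Lemma best_predecessor t x n : inS a b c d (t, x) = true -> level (t, x) = S n ->
  exists z bb, inS a b c d z = true /\ up z bb = (t, x) /\
    G z = Rmax (G ((t - 1)%Z, (x - 1)%Z)) (G ((t - 1)%Z, (x + 1)%Z)).
Proof.
  intros Hin Hn.
  assert (Hsw : up ((t - 1)%Z, (x - 1)%Z) true = (t, x)) by (unfold up; simpl; f_equal; lia).
  assert (Hnw : up ((t - 1)%Z, (x + 1)%Z) false = (t, x)) by (unfold up; simpl; f_equal; lia).
  pose proof (G_nonneg ((t - 1)%Z, (x - 1)%Z)). pose proof (G_nonneg ((t - 1)%Z, (x + 1)%Z)).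
  destruct (inS a b c d ((t - 1)%Z, (x - 1)%Z)) eqn:E1;
    destruct (inS a b c d ((t - 1)%Z, (x + 1)%Z)) eqn:E2.
  - destruct (Rle_dec (G ((t - 1)%Z, (x - 1)%Z)) (G ((t - 1)%Z, (x + 1)%Z))).
    + exists ((t - 1)%Z, (x + 1)%Z), false. repeat split; auto; unfold Rmax; destruct Rle_dec; lra.
    + exists ((t - 1)%Z, (x - 1)%Z), true. repeat split; auto; unfold Rmax; destruct Rle_dec; lra.
  - exists ((t - 1)%Z, (x - 1)%Z), true. rewrite (G_outside _ E2).
    repeat split; auto; unfold Rmax; destruct Rle_dec; lra.
  - exists ((t - 1)%Z, (x + 1)%Z), false. rewrite (G_outside _ E1).
    repeat split; auto; unfold Rmax; destruct Rle_dec; lra.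
  - destruct (some_predecessor t x n Hin Hn); congruence.
Qed.

Lemma G_attained t x : inS a b c d (t, x) = true ->
  exists s, path_inside s /\ ppt (bottom a b c d) s (length s) = (t, x) /\
            path_sum a b c d xi s = G (t, x).
Proof.
  remember (level (t, x)) as n eqn:Hn. revert t x Hn.
  induction n as [|n IH]; intros t x Hn Hin.
  - assert (Hb : bottom a b c d = (t, x)).
    { apply inS_iff in Hin. unfold level, bottom in *. cbn [fst] in Hn.
      f_equal; zlia. }
    exists []. unfold path_inside, path_sum. simpl. rewrite Hb.
    split; [intros i Hi; replace i with 0%nat by lia; exact Hin|]. split; [reflexivity|].
    rewrite (G_unfold t x Hin), !G_outside by apply (level_zero_below t x Hin (eq_sym Hn)).
    unfold Rmax; destruct Rle_dec; lra.
  - destruct (best_predecessor t x n Hin (eq_sym Hn)) as [[tz xz] [bb [Hz [Hup HG]]]].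
    assert (Htz : tz = (t - 1)%Z) by (injection Hup; lia). subst tz.
    destruct (IH (t - 1)%Z xz (eq_sym (level_pred t x n Hin (eq_sym Hn) xz)) Hz)
      as [s [Hs1 [Hs2 Hs3]]].
    exists (s ++ [bb]). split; [|split].
    + intros i Hi. rewrite length_app in Hi. simpl in Hi.
      destruct (Nat.eq_dec i (S (length s))) as [->|].
      * rewrite ppt_app_last, Hs2, Hup. exact Hin.
      * rewrite ppt_app_le by lia. apply Hs1. lia.
    + rewrite length_app, Nat.add_1_r, ppt_app_last, Hs2. exact Hup.
    + rewrite path_sum_snoc, Hs2, Hup, Hs3, HG, (G_unfold t x Hin). lra.
Qed.

End Rectangle.

(** * The traces crossing the rectangle *)

Section Crossings.
Variables a b c d : Z.

Lemma inS_ext t1 x1 t2 x2 : t1 = t2 -> x1 = x2 -> inS a b c d (t1, x1) = inS a b c d (t2, x2).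
Proof. intros -> ->. reflexivity. Qed.

Lemma inE_tedge y0 s i : (1 <= i <= length s)%nat ->
  inE a b c d (tedge y0 s i) = inS a b c d (tpt y0 s (i - 1)) || inS a b c d (tpt y0 s i).
Proof.
  intros Hi.
  assert (E : tpt y0 s i = next (tpt y0 s (i - 1)) (nth (i - 1) s false)).
  { replace i with (S (i - 1)) at 1 by lia. apply tpt_S. lia. }
  unfold tedge, inE. rewrite E.
  generalize (tpt y0 s (i - 1)) as p. generalize (nth (i - 1) s false) as bb.
  intros bb [t x]. destruct bb; unfold next, upper; cbn [fst snd stepZ]; [reflexivity|].
  rewrite orb_comm. f_equal. apply inS_ext; lia.
Qed.

Lemma inSbar_prev y bb : inS a b c d (next y bb) = true -> inSbar a b c d y = true.
Proof.
  destruct y as [t x]. unfold next, inSbar. cbn [fst snd]. intros H.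
  destruct bb; cbn [stepZ] in H.
  - rewrite H, ?orb_true_r. reflexivity.
  - rewrite (inS_ext (t - 1) (x + 1) (t + -1) (x + 1)), H, ?orb_true_r by lia. reflexivity.
Qed.

Lemma inSbar_next y bb : inS a b c d y = true -> inSbar a b c d (next y bb) = true.
Proof.
  destruct y as [t x]. unfold next, inSbar. cbn [fst snd]. intros H.
  destruct bb; cbn [stepZ].
  - rewrite (inS_ext (t + 1 - 1) (x + 1 - 1) t x), H, ?orb_true_r by lia. reflexivity.
  - rewrite (inS_ext (t + -1 + 1) (x + 1 - 1) t x), H, ?orb_true_r by lia. reflexivity.
Qed.

(* A broken trace crosses S iff it starts outside S, steps into S, and then
   escapes from S. *)
Definition crossing (y0 : Pt) (bb : bool) (s : list bool) : Prop :=
  inS a b c d y0 = false /\ inS a b c d (next y0 bb) = true /\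
  escapes (inS a b c d) (next y0 bb) s.

Lemma inC_crossing y0 s : inC a b c d (y0, s) ->
  exists bb s', s = bb :: s' /\ crossing y0 bb s'.
Proof.
  intros [Hn [Hb0 [Hbn [Hmid Hedge]]]].
  destruct s as [|bb s']; [simpl in Hn; lia|].
  unfold inBdry in Hb0, Hbn. apply andb_true_iff in Hb0 as [_ Hb0], Hbn as [_ Hbn].
  apply negb_true_iff in Hb0, Hbn.
  exists bb, s'. split; [reflexivity|]. split; [exact Hb0|]. split; [|split].
  - destruct s' as [|b2 s'']; [|apply (Hmid 1%nat); simpl; lia].
    specialize (Hedge 1%nat ltac:(simpl; lia)). rewrite inE_tedge in Hedge by (simpl; lia).
    change (tpt y0 [bb] (1 - 1)) with y0 in Hedge.
    change (tpt y0 [bb] 1) with (tpt y0 [bb] (length [bb])) in Hedge.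
    rewrite Hb0, Hbn in Hedge. discriminate.
  - intros i Hi. apply (Hmid (S i)). simpl. lia.
  - exact Hbn.
Qed.

Lemma crossing_inC y0 bb s : crossing y0 bb s -> inC a b c d (y0, bb :: s).
Proof.
  intros [H0 [H1 [Hin Hout]]].
  assert (Hlen : (1 <= length s)%nat).
  { destruct s; [|simpl; lia].
    change (tpt (next y0 bb) [] (length (@nil bool))) with (next y0 bb) in Hout. congruence. }
  split; [simpl; lia|]. split; [|split; [|split]].
  - unfold inBdry. rewrite (inSbar_prev _ _ H1), H0. reflexivity.
  - unfold inBdry. simpl length. rewrite tpt_cons, Hout, andb_true_r.
    replace (length s) with (S (length s - 1)) by lia. rewrite tpt_S by lia.
    apply inSbar_next, Hin. lia.
  - intros [|i] Hi; [lia|]. apply Hin. simpl in Hi. lia.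
  - intros i Hi. rewrite inE_tedge by auto. apply orb_true_iff.
    destruct i as [|[|i]]; [lia| right; rewrite tpt_cons, tpt_0; exact H1| left].
    replace (S (S i) - 1)%nat with (S i) by lia. apply Hin. simpl in Hi. lia.
Qed.

Hypotheses (a_even : Z.even a = true) (b_even : Z.even b = true)
  (c_even : Z.even c = true) (d_even : Z.even d = true)
  (a_le_b : (a <= b)%Z) (c_le_d : (c <= d)%Z).

Lemma rectangle_evens : exists A B C D,
  a = (2 * A)%Z /\ b = (2 * B)%Z /\ c = (2 * C)%Z /\ d = (2 * D)%Z.
Proof.
  apply Z.even_spec in a_even, b_even, c_even, d_even.
  destruct a_even as [A HA], b_even as [B HB], c_even as [C HC], d_even as [D HD].
  exists A, B, C, D. auto.
Qed.

(* Coordinates along the two sides: [pt i j] is the bottom moved [i] steps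
   up-right and [j] steps up-left; S is the grid [0, nU) x [0, nV). *)
Definition nU : nat := S (Z.to_nat ((b - a) / 2)).
Definition nV : nat := S (Z.to_nat ((d - c) / 2)).
Definition pt (i j : nat) : Pt :=
  (((a + c) / 2 + Z.of_nat i + Z.of_nat j)%Z, ((a - c) / 2 + Z.of_nat i - Z.of_nat j)%Z).
Definition points : list Pt :=
  flat_map (fun j => map (fun i => pt i j) (seq 0 nU)) (seq 0 nV).

Lemma pt_inS i j : (i < nU)%nat -> (j < nV)%nat -> inS a b c d (pt i j) = true.
Proof.
  destruct rectangle_evens as [A [B [C [D [HA [HB [HC HD]]]]]]].
  intros Hi Hj. unfold pt, nU, nV in *. apply inS_iff. subst.
  split; [exists (A + Z.of_nat i)%Z|]; zlia.
Qed.

Lemma points_spec y : In y points <-> inS a b c d y = true.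
Proof.
  destruct rectangle_evens as [A [B [C [D [HA [HB [HC HD]]]]]]]. unfold points. split.
  - rewrite in_flat_map. intros [j [Hj Hy]]. apply in_map_iff in Hy.
    destruct Hy as [i [<- Hi]]. apply in_seq in Hi, Hj. apply pt_inS; lia.
  - destruct y as [t x]. intros H. apply inS_iff in H as [[k Hk] H].
    apply in_flat_map. exists (Z.to_nat (k - x - C)). split.
    + apply in_seq. unfold nV. subst. zlia.
    + apply in_map_iff. exists (Z.to_nat (k - A)). split.
      * unfold pt. subst. f_equal; zlia.
      * apply in_seq. unfold nU. subst. zlia.
Qed.

Lemma pt_inj i j i' j' : pt i j = pt i' j' -> i = i' /\ j = j'.
Proof. unfold pt. intros H. injection H. lia. Qed.

Lemma NoDup_flat_map {A B} (f : A -> list B) l : NoDup l -> (forall x, In x l -> NoDup (f x)) ->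
  (forall x y z, In x l -> In y l -> In z (f x) -> In z (f y) -> x = y) -> NoDup (flat_map f l).
Proof.
  induction 1 as [|x l Hx Hl IH]; intros Hf Hd; simpl; [constructor|].
  apply NoDup_app.
  - apply Hf; left; auto.
  - apply IH; [intros; apply Hf; right; auto|]. intros; eapply Hd; eauto; right; auto.
  - intros z h1 h2. apply in_flat_map in h2. destruct h2 as [y [Hy Hz]].
    assert (x = y) by (eapply Hd; eauto; [left; auto| right; auto]). subst. auto.
Qed.

Lemma points_nodup : NoDup points.
Proof.
  apply NoDup_flat_map; [apply seq_NoDup| |].
  - intros j _. apply NoDup_map_injective; [|apply seq_NoDup].
    intros u v h. apply pt_inj in h. tauto.
  - intros j j' z _ _ h1 h2. apply in_map_iff in h1, h2.
    destruct h1 as [i [<- _]], h2 as [i' [h _]]. apply pt_inj in h. lia.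
Qed.

Definition max_steps : nat := (Z.to_nat (b - c - a + d) + 2)%nat.

Lemma escapes_length y s : inS a b c d y = true -> escapes (inS a b c d) y s ->
  (length s <= max_steps)%nat.
Proof.
  intros Hy [H1 _]. destruct s as [|bb s]; [simpl; lia|].
  specialize (H1 (length s) ltac:(simpl; lia)).
  pose proof (tpt_snd y (bb :: s) (length s) ltac:(simpl; lia)) as Hs.
  destruct (tpt y (bb :: s) (length s)) as [t1 x1], y as [t0 x0]. simpl in Hs.
  apply inS_iff in H1, Hy. unfold max_steps. simpl length. zlia.
Qed.

Definition entering (y1 : Pt) (bb : bool) : list Trace :=
  if inS a b c d (prev y1 bb) then []
  else map (fun s => (prev y1 bb, bb :: s)) (tails (inS a b c d) max_steps y1).

Definition crossings : list Trace :=
  flat_map (fun y1 => entering y1 true ++ entering y1 false) points.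

Lemma crossings_spec tr : In tr crossings <-> inC a b c d tr.
Proof.
  destruct tr as [y0 s]. unfold crossings. rewrite in_flat_map. split.
  - intros [y1 [Hy1 Hin]]. apply points_spec in Hy1.
    assert (Hbb : exists bb, In (y0, s) (entering y1 bb))
      by (apply in_app_iff in Hin as [Hin|Hin]; eauto).
    destruct Hbb as [bb Hent]. unfold entering in Hent.
    destruct (inS a b c d (prev y1 bb)) eqn:Ep; [destruct Hent|].
    apply in_map_iff in Hent as [s' [Heq Hs']]. injection Heq as <- <-.
    apply crossing_inC. split; [exact Ep|]. rewrite next_prev.
    split; [exact Hy1| eapply tails_sound; eauto].
  - intros Hc. destruct (inC_crossing _ _ Hc) as [bb [s' [Hs [H0 [H1 Ht]]]]]. subst s.
    exists (next y0 bb). split; [apply points_spec, H1|].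
    assert (Hent : In (y0, bb :: s') (entering (next y0 bb) bb)).
    { unfold entering. rewrite prev_next, H0. apply (in_map (fun s => (y0, bb :: s))).
      apply tails_complete; auto. apply (escapes_length (next y0 bb)); auto. }
    apply in_app_iff. destruct bb; auto.
Qed.

Lemma crossings_nodup : NoDup crossings.
Proof.
  assert (Hent : forall y1 bb tr, In tr (entering y1 bb) -> fst tr = prev y1 bb /\
                   hd true (snd tr) = bb).
  { intros y1 bb tr. unfold entering. destruct (inS a b c d (prev y1 bb)); [intros []|].
    intros Hin. apply in_map_iff in Hin as [s [<- _]]. auto. }
  apply NoDup_flat_map; [apply points_nodup| |].
  - intros y1 _. apply NoDup_app.
    + unfold entering. destruct (inS a b c d (prev y1 true)); [constructor|].
      apply NoDup_map_injective; [|apply tails_nodup]. intros u v h. injection h. auto.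
    + unfold entering. destruct (inS a b c d (prev y1 false)); [constructor|].
      apply NoDup_map_injective; [|apply tails_nodup]. intros u v h. injection h. auto.
    + intros tr h1 h2. apply Hent in h1 as [_ h1], h2 as [_ h2]. congruence.
  - intros y1 y2 tr _ _ h1 h2. apply in_app_iff in h1, h2.
    assert (Hy : forall y, (In tr (entering y true) \/ In tr (entering y false)) ->
              y = next (fst tr) (hd true (snd tr))).
    { intros y [h|h]; apply Hent in h as [-> ->]; symmetry; apply next_prev. }
    rewrite (Hy y1 h1), (Hy y2 h2). reflexivity.
Qed.

End Crossings.

Section TotalWeight.
Variables a b c d : Z.
Hypotheses (a_even : Z.even a = true) (b_even : Z.even b = true)
  (c_even : Z.even c = true) (d_even : Z.even d = true)
  (a_le_b : (a <= b)%Z) (c_le_d : (c <= d)%Z).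
Variable xi : Pt -> R.
Hypothesis xi_nonneg : forall y, inS a b c d y = true -> 0 <= xi y.

Let eta := genflow a b c d xi.

(* By conservation, the traces entering S at [y1] through a given edge carry
   exactly the flow of that edge. *)
Lemma entering_weight y1 bb : inS a b c d y1 = true ->
  lsum (weight eta) (entering a b c d y1 bb) =
  if inS a b c d (prev y1 bb) then 0 else eta (edge (prev y1 bb) bb).
Proof.
  intros Hy1. unfold entering. destruct (inS a b c d (prev y1 bb)); [reflexivity|].
  rewrite lsum_map.
  rewrite (lsum_ext _ (fun s => len (Rmax 0 (fst (window eta (prev y1 bb) (bb :: s))))
                                 (Rmin (eta (edge (prev y1 bb) bb)) (snd (window eta (prev y1 bb) (bb :: s)))))).
  2:{ intros s _. rewrite weight_window by congruence.
      destruct (window_bounds eta (prev y1 bb) bb s) as [h1 h2].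
      rewrite Rmax_right, Rmin_right by auto. reflexivity. }
  replace (tails (inS a b c d) (max_steps a b c d) y1)
    with (tails (inS a b c d) (max_steps a b c d) (next (prev y1 bb) bb)) by (rewrite next_prev; reflexivity).
  rewrite (sum_escaping_windows (inS a b c d) eta ((b - c) / 2 + 1)).
  - assert (0 <= eta (edge (prev y1 bb) bb)) by apply genflow_nonneg, xi_nonneg.
    unfold len, Rmax, Rmin. repeat destruct Rle_dec; lra.
  - intros y Hy. exists (xi y). apply genflow_flow_ok; auto.
  - intros [t x] Hy. apply inS_iff in Hy. simpl. zlia.
  - rewrite next_prev. destruct y1 as [t x]. apply inS_iff in Hy1. unfold max_steps. simpl. zlia.
Qed.

(* Only traces entering through a south-east edge from outside carry weight:
   the flow on an edge whose lower end lies outside S vanishes. *)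
Definition inflow (y1 : Pt) : R := if inS a b c d (prev y1 false) then 0 else eta (y1, false).

Lemma crossings_weight : lsum (weight eta) (crossings a b c d) = lsum inflow (points a b c d).
Proof.
  unfold crossings. rewrite lsum_flat_map. apply lsum_ext. intros y1 Hy1.
  apply points_spec in Hy1; auto.
  rewrite lsum_app, !entering_weight by auto. unfold inflow.
  change (edge (prev y1 false) false) with (next (prev y1 false) false, false).
  rewrite next_prev. destruct (inS a b c d (prev y1 true)) eqn:Et; [lra|].
  unfold eta, edge. rewrite genflow_outside by exact Et. lra.
Qed.

(* The inflow lives on the upper-left side of S, where it telescopes to G(top). *)
Lemma inflow_total : lsum inflow (points a b c d) = G a b c d xi (top a b c d).
Proof.
  destruct (rectangle_evens a b c d a_even b_even c_even d_even)
    as [A [B [C [D [HA [HB [HC HD]]]]]]].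
  unfold points, nV. set (J := Z.to_nat ((d - c) / 2)).
  rewrite lsum_flat_map, seq_S, lsum_app, Nat.add_0_l, lsum_zero.
  2:{ intros j Hj. apply in_seq in Hj. rewrite lsum_map. apply lsum_zero. intros i Hi.
      apply in_seq in Hi. unfold inflow.
      replace (prev (pt a c i j) false) with (pt a c i (S j)) by (unfold pt, prev; simpl; f_equal; lia).
      rewrite pt_inS by (unfold nV; auto; lia). reflexivity. }
  unfold lsum at 1. cbn [fold_right]. rewrite lsum_map.
  set (F := fun z : Z => G a b c d xi ((a + c) / 2 + z + Z.of_nat J, (a - c) / 2 + z - Z.of_nat J)%Z).
  rewrite (lsum_ext _ (fun i => F (Z.of_nat i) - F (Z.of_nat i - 1)%Z)).
  - rewrite lsum_telescope. unfold F.
    rewrite (G_outside a b c d xi ((a + c) / 2 + -1 + Z.of_nat J, (a - c) / 2 + -1 - Z.of_nat J)%Z).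
    2:{ apply inS_false. intros [_ H]. unfold J in *. subst. zlia. }
    replace (top a b c d) with (((a + c) / 2 + (Z.of_nat (nU a b) - 1) + Z.of_nat J)%Z,
                                ((a - c) / 2 + (Z.of_nat (nU a b) - 1) - Z.of_nat J)%Z).
    + lra.
    + unfold top, nU, J. subst. f_equal; zlia.
  - intros i Hi. apply in_seq in Hi. unfold inflow.
    replace (inS a b c d (prev (pt a c i J) false)) with false.
    2:{ symmetry. apply inS_false. unfold pt, prev. simpl. intros [_ H]. unfold J in *. subst. zlia. }
    assert (Hin : inS a b c d (pt a c i J) = true) by (apply pt_inS; auto; unfold nV; lia).
    unfold pt in Hin |- *. destruct (flow_increment a b c d xi _ _ Hin) as [_ Hse].
    unfold eta, e_se in *. rewrite Hse. unfold F. f_equal; f_equal; f_equal; lia.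
Qed.

End TotalWeight.

Lemma top_inS a b c d : Z.even b = true -> Z.even d = true -> (a <= b)%Z -> (c <= d)%Z ->
  inS a b c d (top a b c d) = true.
Proof.
  intros Hb Hd Hab Hcd. apply Z.even_spec in Hb as [B ->], Hd as [D ->].
  unfold top. apply inS_iff. split; [exists B|]; zlia.
Qed.

Theorem mainTheorem11 (a b c d : Z)
  (ha : Z.even a = true) (hb : Z.even b = true)
  (hc : Z.even c = true) (hd : Z.even d = true)
  (hab : (a <= b)%Z) (hcd : (c <= d)%Z)
  (xi : Pt -> R) (hxi : forall y, inS a b c d y = true -> 0 <= xi y) :
  (exists L : list Trace, NoDup L /\ forall tr, In tr L <-> inC a b c d tr) /\
  (forall L : list Trace, NoDup L -> (forall tr, In tr L <-> inC a b c d tr) ->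
     let H := sum_weights (genflow a b c d xi) L in
     (* G_S(xi) = max over paths equals H *)
     (exists s, valid_path a b c d s /\ path_sum a b c d xi s = H) /\
     (forall s, valid_path a b c d s -> path_sum a b c d xi s <= H)).
Proof.
  split.
  - exists (crossings a b c d). split; [apply crossings_nodup|]. intros tr. apply crossings_spec; auto.
  - intros L HL HLspec. cbv zeta.
    assert (Htotal : sum_weights (genflow a b c d xi) L = G a b c d xi (top a b c d)).
    { change (sum_weights ?eta L) with (lsum (weight eta) L).
      rewrite (lsum_perm _ L (crossings a b c d)).
      - rewrite crossings_weight, inflow_total; auto.
      - apply NoDup_Permutation; auto using crossings_nodup.
        intros tr. rewrite HLspec, crossings_spec; auto. tauto. }
    rewrite Htotal. split.
    + destruct (top a b c d) as [t x] eqn:Etop.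
      destruct (G_attained a b c d xi hxi ha hc t x) as [s [Hin [Hend Hsum]]].
      { rewrite <- Etop. apply top_inS; auto. }
      exists s. split; [split; [exact Hin| congruence]| exact Hsum].
    + intros s [Hin Hend]. rewrite <- Hend. apply path_sum_le_G; auto.
Qed.
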